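(* Let $(\lambda,\boldsymbol p)$ and $(\lambda',\boldsymbol p')$ be two distinct elements of $\nabla$ with $(\lambda',\boldsymbol p')\ge(\lambda,\boldsymbol p)$ componentwise (i.e. $\lambda'\ge\lambda$ and $p'_i\ge p_i$ for all $i$). If $k>m_+(\lambda',\boldsymbol p')$ and $\lambda'+p'_k>0$, then $f(k;\lambda',\boldsymbol p')>f(k;\lambda,\boldsymbol p)$.
   Context: $\nabla=\{(\lambda,\boldsymbol p):\lambda\ge0,\ 1\ge p_1\ge p_2\ge\dots\ge0,\ \sum_ip_i<\infty\}$. For $(\lambda,\boldsymbol p)\in\nabla$, $f(k;\lambda,\boldsymbol p)$ is the probability that $X+\sum_iB_i=k$ where $X\sim\mathrm{Poisson}(\lambda)$, $B_i\sim\mathrm{Bernoulli}(p_i)$ are independent, with $f(-1;\cdot)=0$. The leading mode $m_+(\lambda,\boldsymbol p)$ is the unique integer $k$ with $f(k-1;\lambda,\boldsymbol p)\le f(k;\lambda,\boldsymbol p)>f(k+1;\lambda,\boldsymbol p)$. $p'_k$ denotes the $k$-th component of $\boldsymbol p'$. *)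

From Stdlib Require Import Reals Lra Arith.
From Coquelicot Require Import Coquelicot.
Open Scope R_scope.

(* Convention: a sequence p = (p_1, p_2, ...) is represented by
   p : nat -> R with  p i = p_{i+1}  (0-based storage). *)

Definition in_nabla (lam : R) (p : nat -> R) : Prop :=
  0 <= lam /\ p 0%nat <= 1 /\ (forall i, p (S i) <= p i) /\
  (forall i, 0 <= p i) /\ ex_series p.

Definition poisson_pmf (lam : R) (j : nat) : R :=
  exp (- lam) * lam ^ j / INR (Factorial.fact j).

(* pmf of B_1 + ... + B_n, B_i ~ Bernoulli(p_i) independent *)
Fixpoint bern_sum_pmf (p : nat -> R) (n : nat) (j : nat) : R :=
  match n with
  | O => match j with O => 1 | S _ => 0 end
  | S n' => (1 - p n') * bern_sum_pmf p n' j +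
            match j with O => 0 | S j' => p n' * bern_sum_pmf p n' j' end
  end.

Definition f_trunc (lam : R) (p : nat -> R) (n k : nat) : R :=
  sum_f_R0 (fun j => poisson_pmf lam (k - j) * bern_sum_pmf p n j) k.

(* f(k; lam, p) = P(X + sum_i B_i = k), obtained as the limit n -> oo of
   the truncated sums (the infinite sum of Bernoullis converges a.s.
   since sum p_i < oo, and P(X + B_1..B_n = k) -> P(X + sum B_i = k)). *)
Definition fpmf (lam : R) (p : nat -> R) (k : nat) : R :=
  real (Lim_seq (fun n => f_trunc lam p n k)).

Definition f_pred (lam : R) (p : nat -> R) (k : nat) : R :=
  match k with O => 0 | S k' => fpmf lam p k' end.

Definition is_leading_mode (lam : R) (p : nat -> R) (m : nat) : Prop :=
  f_pred lam p m <= fpmf lam p m /\ fpmf lam p m > fpmf lam p (S m).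

From Stdlib Require Import Reals Lra Lia Arith FunctionalExtensionality Classical.
From Coquelicot Require Import Coquelicot.
Open Scope R_scope.

(* f(.; lam, p) is the Poisson(lam) convolution of the law of sum_i B_i, and every law in
   sight is log-concave.  For a log-concave law g, being nondecreasing on [0, K] survives
   raising lam (d/dlam f(k) = f(k-1) - f(k)) and raising any p_i (f is then
   (1 - p_i) g + p_i g(. - 1) with g log-concave).  So if some (mu, q) <= (lam', p') had
   f(k+1; mu, q) > f(k; mu, q) with k >= m = m_+(lam', p'), then f(.; lam', p') would be
   nondecreasing on [0, m+1], contradicting the mode.  Hence every dominated f(.; mu, q) is
   nonincreasing beyond m, and the same two derivatives show that f(k; mu, q) grows along
   any monotone path of parameters from (lam, p) to (lam', p').  One step of the path is
   strict because f(k; lam', p') > 0, which is where lam' + p'_k > 0 enters.  Coordinates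
   are raised one at a time for finitely many Bernoulli summands, and the comparison passes
   to the limit. *)

Lemma le_of_is_derive_nonneg f df a b : a <= b ->
  (forall x, a <= x <= b -> is_derive f x (df x)) -> (forall x, a < x < b -> 0 <= df x) ->
  f a <= f b.
Proof.
  intros Hab Hd Hpos.
  destruct (Req_dec a b) as [<-|Hne]; [lra|].
  destruct (MVT_cor2 f df a b ltac:(lra)) as [c [E Hc]].
  { intros c Hc; apply is_derive_Reals, Hd, Hc. }
  specialize (Hpos c Hc); nra.
Qed.

Lemma lt_of_is_derive_pos f df a b : a < b ->
  (forall x, a <= x <= b -> is_derive f x (df x)) -> (forall x, a < x < b -> 0 < df x) ->
  f a < f b.
Proof.
  intros Hab Hd Hpos.
  destruct (MVT_cor2 f df a b Hab) as [c [E Hc]].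
  { intros c Hc; apply is_derive_Reals, Hd, Hc. }
  specialize (Hpos c Hc); nra.
Qed.

Lemma sum_f_R0_ge_term (u : nat -> R) N j : (forall n, 0 <= u n) -> (j <= N)%nat ->
  u j <= sum_f_R0 u N.
Proof.
  intros Hu Hj; induction N as [|N IH]; simpl.
  - replace j with 0%nat by lia; lra.
  - destruct (Nat.eq_dec j (S N)) as [->|Hne].
    + pose proof (cond_pos_sum u N Hu); lra.
    + pose proof (Hu (S N)); specialize (IH ltac:(lia)); lra.
Qed.

Lemma sum_f_R0_telescope (u : nat -> R) N :
  sum_f_R0 (fun i => u (S i) - u i) N = u (S N) - u 0%nat.
Proof. induction N as [|N IH]; simpl; [|rewrite IH]; ring. Qed.

(** * Bernoulli convolution and log-concavity *)

Definition shift (g : nat -> R) (j : nat) : R :=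
  match j with O => 0 | S j' => g j' end.

(* The law of [Y + B] for [Y ~ g] and an independent [B ~ Bernoulli t]. *)
Definition bconv (t : R) (g : nat -> R) (j : nat) : R :=
  (1 - t) * g j + t * shift g j.

Definition upd (q : nat -> R) (i : nat) (v : R) (x : nat) : R :=
  if Nat.eqb x i then v else q x.

Definition nonneg_seq (g : nat -> R) : Prop := forall j, 0 <= g j.

(* Log-concavity in ratio form; unlike [g j ^ 2 >= g (j - 1) * g (j + 1)] it
   excludes internal zeros. *)
Definition log_concave (g : nat -> R) : Prop :=
  forall a j, (a < j)%nat -> g a * g (S j) <= g (S a) * g j.

Definition nondecr_upto (g : nat -> R) (K : nat) : Prop :=
  forall j, (j <= K)%nat -> shift g j <= g j.

Lemma upd_same q i v : upd q i v i = v.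
Proof. unfold upd; now rewrite Nat.eqb_refl. Qed.

Lemma upd_other q i v x : x <> i -> upd q i v x = q x.
Proof. intros Hx; unfold upd; now rewrite (proj2 (Nat.eqb_neq x i) Hx). Qed.

Lemma upd_id q i : upd q i (q i) = q.
Proof.
  apply functional_extensionality; intros x; unfold upd.
  destruct (Nat.eqb_spec x i); subst; reflexivity.
Qed.

Lemma upd_forall (P : nat -> R -> Prop) q i v :
  (forall x, P x (q x)) -> P i v -> forall x, P x (upd q i v x).
Proof. intros Hq Hv x; unfold upd; destruct (Nat.eqb_spec x i); subst; auto. Qed.

Lemma shift_bconv t g : shift (bconv t g) = bconv t (shift g).
Proof. apply functional_extensionality; intros [|j]; unfold bconv; simpl; ring. Qed.

Lemma bconv_comm a b g : bconv a (bconv b g) = bconv b (bconv a g).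
Proof.
  apply functional_extensionality; intros j.
  unfold bconv at 1 3; rewrite !shift_bconv; unfold bconv; ring.
Qed.

Lemma bconv0 g : bconv 0 g = g.
Proof. apply functional_extensionality; intros j; unfold bconv; ring. Qed.

Lemma bconv_range t g j : 0 <= t <= 1 -> (forall x, 0 <= g x <= 1) -> 0 <= bconv t g j <= 1.
Proof.
  intros Ht Hg; unfold bconv.
  assert (0 <= shift g j <= 1) by (destruct j; simpl; auto; lra).
  specialize (Hg j); nra.
Qed.

Lemma bconv_le_param a b g k : a <= b -> g (S k) <= g k -> bconv a g (S k) <= bconv b g (S k).
Proof. intros Hab Hg; unfold bconv; simpl; nra. Qed.

Lemma log_concave_gap2 g a j : log_concave g -> (a < j)%nat ->
  g a * g (S (S j)) <= g (S (S a)) * g j.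
Proof.
  intros Hg Haj.
  assert (H1 : g a * g (S (S j)) <= g (S a) * g (S j)) by (apply Hg; lia).
  destruct (Nat.eq_dec (S a) j) as [<-|Hne]; [lra|].
  assert (g (S a) * g (S j) <= g (S (S a)) * g j) by (apply Hg; lia).
  lra.
Qed.

(* The defect of [bconv t g] at [(a, j)] is a combination, with weights [(1-t)^2], [t(1-t)]
   and [t^2], of the defect of [g] at [(a, j)], the two-step defect
   [g (a+1) g (j-1) - g (a-1) g (j+1)] ([log_concave_gap2]) and the defect at [(a-1, j-1)]. *)
Lemma log_concave_bconv t g : 0 <= t <= 1 -> nonneg_seq g -> log_concave g ->
  log_concave (bconv t g).
Proof.
  intros Ht Hn Hg a j Haj; unfold bconv.
  destruct j as [|j]; [lia|].
  assert (Hj : g a * g (S (S j)) <= g (S a) * g (S j)) by (apply Hg; lia).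
  assert (0 <= t * t) by nra; assert (0 <= (1 - t) * (1 - t)) by nra;
    assert (0 <= t * (1 - t)) by nra.
  destruct a as [|a]; simpl shift.
  - assert (0 <= g 1%nat * g j) by (apply Rmult_le_pos; auto).
    assert (0 <= g 0%nat * g j) by (apply Rmult_le_pos; auto).
    assert (0 <= (1 - t) * (1 - t) * (g 1%nat * g (S j) - g 0%nat * g (S (S j))))
      by (apply Rmult_le_pos; lra).
    assert (0 <= t * (1 - t) * (g 1%nat * g j)) by (apply Rmult_le_pos; lra).
    assert (0 <= t * t * (g 0%nat * g j)) by (apply Rmult_le_pos; lra).
    nra.
  - assert (g a * g (S j) <= g (S a) * g j) by (apply Hg; lia).
    assert (g a * g (S (S j)) <= g (S (S a)) * g j) by (apply log_concave_gap2; auto; lia).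
    assert (0 <= (1 - t) * (1 - t) * (g (S (S a)) * g (S j) - g (S a) * g (S (S j))))
      by (apply Rmult_le_pos; lra).
    assert (0 <= t * (1 - t) * (g (S (S a)) * g j - g a * g (S (S j))))
      by (apply Rmult_le_pos; lra).
    assert (0 <= t * t * (g (S a) * g j - g a * g (S j))) by (apply Rmult_le_pos; lra).
    nra.
Qed.

Lemma log_concave_zero_after g a c : nonneg_seq g -> log_concave g -> 0 < g a -> (a < c)%nat ->
  g c = 0 -> forall d, (c <= d)%nat -> g d = 0.
Proof.
  intros Hn Hg Ha Hac Hc d Hd; induction Hd as [|d Hd IH]; auto.
  assert (H := Hg a d ltac:(lia)); rewrite IH, Rmult_0_r in H.
  specialize (Hn (S d)); nra.
Qed.

Lemma log_concave_decr_step g j : nonneg_seq g -> log_concave g -> g (S j) < g j ->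
  g (S (S j)) <= g (S j).
Proof.
  intros Hn Hg Hj.
  assert (H := Hg j (S j) ltac:(lia)).
  pose proof (Hn (S (S j))); pose proof (Hn (S j)); nra.
Qed.

Lemma nondecr_upto_of_log_concave g k : nonneg_seq g -> log_concave g ->
  0 < g (S k) -> g k <= g (S k) -> nondecr_upto g (S k).
Proof.
  intros Hn Hg Hpos Hk [|a] Ha; simpl; [apply Hn|].
  destruct (Nat.eq_dec a k) as [->|Hne]; auto.
  assert (g a * g (S k) <= g (S a) * g k) by (apply Hg; lia).
  specialize (Hn (S a)); nra.
Qed.

Lemma not_nondecr_upto_of_drop g m K : g (S m) < g m -> (m < K)%nat -> ~ nondecr_upto g K.
Proof. intros Hdrop HmK HK; specialize (HK (S m) HmK); simpl in HK; lra. Qed.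

(* Once a log-concave [G] drops it keeps dropping, so [bconv a G] would drop one step later. *)
Lemma nondecr_upto_of_bconv G K a : nonneg_seq G -> log_concave G -> 0 <= a <= 1 ->
  nondecr_upto (bconv a G) K -> forall j, (j < K)%nat -> shift G j <= G j.
Proof.
  intros Hn HG Ha HK [|j] Hj; simpl; [apply Hn|].
  destruct (Rle_dec (G j) (G (S j))) as [|Hdrop]; auto; exfalso.
  apply Rnot_le_lt in Hdrop.
  assert (Hnext := log_concave_decr_step G j Hn HG Hdrop).
  destruct (Req_dec a 0) as [->|Ha0].
  - specialize (HK (S j) ltac:(lia)); rewrite bconv0 in HK; simpl in HK; lra.
  - specialize (HK (S (S j)) Hj); rewrite shift_bconv in HK; unfold bconv in HK; simpl in HK.
    nra.
Qed.

(* The increment of [bconv t G] at [j] is [(1 - t) d j + t d (j - 1)] with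
   [d = G - shift G], and [d (j - 1) >= 0] below [K]. *)
Lemma nondecr_upto_bconv_mono G K a b : nonneg_seq G -> log_concave G ->
  0 <= a -> a <= b -> b <= 1 ->
  nondecr_upto (bconv a G) K -> nondecr_upto (bconv b G) K.
Proof.
  intros Hn HG Ha Hab Hb HK j Hj.
  assert (Hprev : shift (shift G) j <= shift G j).
  { destruct j as [|j]; simpl; [lra|].
    apply (nondecr_upto_of_bconv G K a); auto; lra. }
  specialize (HK j Hj); rewrite shift_bconv in *; unfold bconv in *.
  destruct (Rle_dec (shift G j) (G j)); nra.
Qed.

Lemma bern_sum_pmf_S q n : bern_sum_pmf q (S n) = bconv (q n) (bern_sum_pmf q n).
Proof. apply functional_extensionality; intros [|j]; unfold bconv; simpl; ring. Qed.

Lemma bern_sum_pmf_ext q q' n : (forall i, (i < n)%nat -> q i = q' i) ->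
  bern_sum_pmf q n = bern_sum_pmf q' n.
Proof.
  induction n as [|n IH]; intros E; [reflexivity|].
  rewrite !bern_sum_pmf_S, E, IH by (auto; intros; apply E; lia); reflexivity.
Qed.

Lemma bern_sum_pmf_upd q i v n : (i < n)%nat ->
  bern_sum_pmf (upd q i v) n = bconv v (bern_sum_pmf (upd q i 0) n).
Proof.
  induction n as [|n IH]; intros Hi; [lia|].
  rewrite !bern_sum_pmf_S.
  destruct (Nat.eq_dec n i) as [->|Hne].
  - rewrite !upd_same, bconv0.
    f_equal; apply bern_sum_pmf_ext; intros x Hx; rewrite !upd_other by lia; reflexivity.
  - rewrite !upd_other, IH by lia; apply bconv_comm.
Qed.

Lemma bern_sum_pmf_range q n j : (forall i, 0 <= q i <= 1) -> 0 <= bern_sum_pmf q n j <= 1.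
Proof.
  intros Hq; revert j; induction n as [|n IH]; intros j.
  - destruct j; simpl; lra.
  - rewrite bern_sum_pmf_S; apply bconv_range; auto.
Qed.

Lemma log_concave_bern_sum_pmf q n : (forall i, 0 <= q i <= 1) -> log_concave (bern_sum_pmf q n).
Proof.
  intros Hq; induction n as [|n IH].
  - intros [|a] [|j] H; simpl; lra.
  - rewrite bern_sum_pmf_S; apply log_concave_bconv; auto.
    intros j; apply bern_sum_pmf_range; auto.
Qed.

Lemma raise_coords (P : (nat -> R) -> Prop) n q q' :
  (forall r r', (forall i, (i < n)%nat -> r i = r' i) -> P r -> P r') ->
  (forall r i, (forall j, q j <= r j <= q' j) -> (i < n)%nat -> P r -> P (upd r i (q' i))) ->
  (forall j, q j <= q' j) -> P q -> P q'.
Proof.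
  intros Hext Hstep Hqq' Hq.
  set (mix N i := if Nat.ltb i N then q' i else q i).
  assert (Hmix : forall N, (N <= n)%nat -> P (mix N)).
  { induction N as [|N IH]; intros HN.
    - exact Hq.
    - apply (Hext (upd (mix N) N (q' N))).
      + intros i _; unfold upd, mix.
        destruct (Nat.eqb_spec i N), (Nat.ltb_spec i N), (Nat.ltb_spec i (S N));
          subst; auto; lia.
      + apply Hstep; [|lia|apply IH; lia].
        intros j; unfold mix; specialize (Hqq' j); destruct (Nat.ltb j N); lra. }
  apply (Hext (mix n)); [|apply Hmix; lia].
  intros i Hi; unfold mix; now rewrite (proj2 (Nat.ltb_lt i n) Hi).
Qed.

(** * Poisson convolution *)

(* [poisson_conv mu g] is the law of [X + Y] for [X ~ Poisson mu] and an independent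
   [Y ~ g]; without the factor [exp (- mu)], [pconv] satisfies
   [d/dmu pconv mu g k = pconv mu g (k - 1)] and [pconv 0 g = g]. *)
Definition pconv (mu : R) (g : nat -> R) (k : nat) : R :=
  sum_f_R0 (fun j => mu ^ (k - j) / INR (fact (k - j)) * g j) k.

Definition poisson_conv (mu : R) (g : nat -> R) (k : nat) : R := exp (- mu) * pconv mu g k.

Lemma f_trunc_poisson_conv mu q n : f_trunc mu q n = poisson_conv mu (bern_sum_pmf q n).
Proof.
  apply functional_extensionality; intros k.
  unfold f_trunc, poisson_conv, pconv, poisson_pmf; rewrite scal_sum.
  apply sum_eq; intros; unfold Rdiv; ring.
Qed.

Lemma pconv_S mu g k : pconv mu g (S k) =
  sum_f_R0 (fun j => mu ^ S (k - j) / INR (fact (S (k - j))) * g j) k + g (S k).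
Proof.
  unfold pconv; rewrite tech5, Nat.sub_diag; f_equal.
  - apply sum_eq; intros i Hi; now replace (S k - i)%nat with (S (k - i)) by lia.
  - simpl; field.
Qed.

Lemma pconv_at0 g : pconv 0 g = g.
Proof.
  apply functional_extensionality; intros [|k]; [unfold pconv; simpl; field|].
  rewrite pconv_S, (sum_eq _ (fun _ => 0)), sum_cte; [ring|].
  intros i _; simpl; lra.
Qed.

Lemma is_derive_pconv g k mu : is_derive (fun x => pconv x g k) mu (shift (pconv mu g) k).
Proof.
  destruct k as [|k]; simpl shift.
  - apply (is_derive_ext (fun _ => g 0%nat)); [|exact (is_derive_const _ _)].
    intros x; unfold pconv; simpl; field.
  - apply (is_derive_ext (fun x => sum_n (fun j => x ^ S (k - j) / INR (fact (S (k - j))) * g j) k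
                                   + g (S k))).
    { intros x; rewrite sum_n_Reals, pconv_S; reflexivity. }
    rewrite <- (Rplus_0_r (pconv mu g k)).
    apply (is_derive_plus _ (fun _ => g (S k))); [|exact (is_derive_const _ _)].
    unfold pconv; rewrite <- sum_n_Reals.
    apply (is_derive_sum_n (fun j x => x ^ S (k - j) / INR (fact (S (k - j))) * g j)).
    intros j _; auto_derive; auto.
    set (d := (k - j)%nat).
    change (match d with 0%nat => 1 | S _ => INR d + 1 end) with (INR (S d)).
    change (fact d + d * fact d)%nat with (fact (S d)).
    rewrite fact_simpl, mult_INR.
    assert (INR (fact d) <> 0) by apply INR_fact_neq_0.
    assert (INR (S d) <> 0) by (apply not_0_INR; lia).
    field; auto.
Qed.

Lemma pconv_ge_term mu g k j : 0 <= mu -> nonneg_seq g -> (j <= k)%nat ->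
  mu ^ (k - j) / INR (fact (k - j)) * g j <= pconv mu g k.
Proof.
  intros Hmu Hg Hj; unfold pconv.
  apply (sum_f_R0_ge_term (fun j => mu ^ (k - j) / INR (fact (k - j)) * g j)); auto.
  intros n; apply Rmult_le_pos; [|apply Hg].
  apply Rle_mult_inv_pos; [apply pow_le; auto | apply INR_fact_lt_0].
Qed.

Lemma pconv_nonneg mu g : 0 <= mu -> nonneg_seq g -> nonneg_seq (pconv mu g).
Proof.
  intros Hmu Hg k; eapply Rle_trans; [|apply (pconv_ge_term mu g k k); auto].
  rewrite Nat.sub_diag; simpl; pose proof (Hg k); lra.
Qed.

Lemma pconv_shift mu g : pconv mu (shift g) = shift (pconv mu g).
Proof.
  apply functional_extensionality; intros [|k]; [unfold pconv; simpl; ring|].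
  unfold pconv at 1; rewrite decomp_sum by lia; simpl shift; rewrite Rmult_0_r, Rplus_0_l.
  apply sum_eq; intros; reflexivity.
Qed.

Lemma pconv_bconv mu t g : pconv mu (bconv t g) = bconv t (pconv mu g).
Proof.
  apply functional_extensionality; intros k.
  unfold bconv at 2; rewrite <- pconv_shift; unfold pconv, bconv.
  rewrite !scal_sum, <- sum_plus; apply sum_eq; intros; ring.
Qed.

Lemma is_derive_pconv_mul g a b y :
  is_derive (fun x => pconv x g a * pconv x g b) y
    (shift (pconv y g) a * pconv y g b + pconv y g a * shift (pconv y g) b).
Proof. apply (is_derive_mult (fun x => pconv x g a)); auto using is_derive_pconv, Rmult_comm. Qed.

(* Induction on [a + j]: the derivative in [mu] of each log-concavity defect of
   [pconv mu g] is a sum of two defects of smaller index sum. *)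
Lemma log_concave_pconv mu g : 0 <= mu -> nonneg_seq g -> log_concave g ->
  log_concave (pconv mu g).
Proof.
  intros Hmu Hn Hg.
  assert (Hdefect : forall s a j, (a + j <= s)%nat -> (a < j)%nat -> forall x, 0 <= x ->
            pconv x g a * pconv x g (S j) <= pconv x g (S a) * pconv x g j).
  { induction s as [|s IH]; intros a [|j] Hs Haj x Hx; try lia.
    enough (pconv 0 g (S a) * pconv 0 g (S j) - pconv 0 g a * pconv 0 g (S (S j))
            <= pconv x g (S a) * pconv x g (S j) - pconv x g a * pconv x g (S (S j))).
    { rewrite pconv_at0 in H; specialize (Hg a (S j) Haj); lra. }
    apply (le_of_is_derive_nonneg
      (fun x => pconv x g (S a) * pconv x g (S j) - pconv x g a * pconv x g (S (S j)))
      (fun y => shift (pconv y g) (S a) * pconv y g (S j)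
                + pconv y g (S a) * shift (pconv y g) (S j)
                - (shift (pconv y g) a * pconv y g (S (S j))
                   + pconv y g a * shift (pconv y g) (S (S j)))));
      auto.
    { intros y _; apply (is_derive_minus (fun x => pconv x g (S a) * pconv x g (S j)));
        apply is_derive_pconv_mul. }
    intros y [Hy _]; simpl shift.
    assert (0 <= pconv y g (S a) * pconv y g j - pconv y g a * pconv y g (S j)).
    { destruct (Nat.eq_dec a j) as [->|Hne]; [lra|].
      enough (pconv y g a * pconv y g (S j) <= pconv y g (S a) * pconv y g j) by lra.
      apply IH; [lia | lia | lra]. }
    assert (0 <= pconv y g a * pconv y g (S j) - shift (pconv y g) a * pconv y g (S (S j))).
    { destruct a as [|a]; simpl shift.
      - assert (Hp := pconv_nonneg y g ltac:(lra) Hn).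
        pose proof (Rmult_le_pos _ _ (Hp 0%nat) (Hp (S j))); lra.
      - enough (pconv y g a * pconv y g (S (S j)) <= pconv y g (S a) * pconv y g (S j)) by lra.
        apply IH; [lia | lia | lra]. }
    lra. }
  intros a j Haj; apply (Hdefect (a + j)%nat); auto.
Qed.

Lemma nondecr_upto_pconv_mono mu mu' g K : mu <= mu' ->
  nondecr_upto (pconv mu g) K -> nondecr_upto (pconv mu' g) K.
Proof.
  intros Hmu HK j Hj.
  enough (Hall : forall x, mu <= x -> shift (pconv x g) j <= pconv x g j) by (apply Hall; lra).
  induction j as [|j IH]; intros x Hx; simpl shift.
  - specialize (HK 0%nat Hj); unfold pconv in *; simpl in *; lra.
  - enough (pconv mu g (S j) - pconv mu g j <= pconv x g (S j) - pconv x g j).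
    { specialize (HK (S j) Hj); simpl in HK; lra. }
    apply (le_of_is_derive_nonneg (fun y => pconv y g (S j) - pconv y g j)
             (fun y => pconv y g j - shift (pconv y g) j)); auto.
    + intros y _; apply (is_derive_minus (fun y => pconv y g (S j))); apply is_derive_pconv.
    + intros y [Hy _]; specialize (IH ltac:(lia) y ltac:(lra)); lra.
Qed.

Lemma log_concave_scale c g : log_concave g -> log_concave (fun k => c * g k).
Proof.
  intros Hg a j Haj; specialize (Hg a j Haj).
  pose proof (Rle_0_sqr c); unfold Rsqr in *; nra.
Qed.

Lemma nondecr_upto_scale c g K : 0 < c ->
  nondecr_upto (fun k => c * g k) K <-> nondecr_upto g K.
Proof.
  intros Hc; split; intros HK j Hj; specialize (HK j Hj); destruct j; simpl in *; nra.
Qed.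

Lemma poisson_conv_at0 g : poisson_conv 0 g = g.
Proof.
  apply functional_extensionality; intros k.
  unfold poisson_conv; rewrite pconv_at0, Ropp_0, exp_0; ring.
Qed.

Lemma poisson_conv_bconv mu t g : poisson_conv mu (bconv t g) = bconv t (poisson_conv mu g).
Proof.
  apply functional_extensionality; intros [|k];
    unfold poisson_conv; rewrite pconv_bconv; unfold bconv; simpl; ring.
Qed.

Lemma is_derive_poisson_conv g k mu :
  is_derive (fun x => poisson_conv x g k) mu (shift (poisson_conv mu g) k - poisson_conv mu g k).
Proof.
  unfold poisson_conv.
  assert (He : is_derive (fun x => exp (- x)) mu (- exp (- mu))) by (auto_derive; auto; ring).
  replace (shift (fun k => exp (- mu) * pconv mu g k) k - exp (- mu) * pconv mu g k)
    with (- exp (- mu) * pconv mu g k + exp (- mu) * shift (pconv mu g) k)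
    by (destruct k; simpl; ring).
  exact (is_derive_mult _ _ mu _ _ He (is_derive_pconv g k mu) Rmult_comm).
Qed.

Lemma poisson_conv_nonneg mu g : 0 <= mu -> nonneg_seq g -> nonneg_seq (poisson_conv mu g).
Proof.
  intros Hmu Hg k; apply Rmult_le_pos; [left; apply exp_pos | apply pconv_nonneg; auto].
Qed.

Lemma log_concave_poisson_conv mu g : 0 <= mu -> nonneg_seq g -> log_concave g ->
  log_concave (poisson_conv mu g).
Proof. intros; apply log_concave_scale, log_concave_pconv; auto. Qed.

Lemma nondecr_upto_poisson_conv_mono mu mu' g K : mu <= mu' ->
  nondecr_upto (poisson_conv mu g) K -> nondecr_upto (poisson_conv mu' g) K.
Proof.
  intros Hmu HK; apply nondecr_upto_scale; [apply exp_pos|].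
  apply (nondecr_upto_pconv_mono mu); auto.
  apply (nondecr_upto_scale (exp (- mu))); [apply exp_pos | exact HK].
Qed.

Lemma poisson_conv_pos mu mu' g j k : 0 < mu' -> nonneg_seq g -> (j <= k)%nat ->
  0 < poisson_conv mu g j -> 0 < poisson_conv mu' g k.
Proof.
  intros Hmu' Hg Hjk Hj.
  destruct (classic (exists i, (i <= j)%nat /\ 0 < g i)) as [[i [Hij Hi]]|Hnone].
  - apply Rmult_lt_0_compat; [apply exp_pos|].
    eapply Rlt_le_trans; [|apply (pconv_ge_term mu' g k i); auto; [lra | lia]].
    apply Rmult_lt_0_compat; auto.
    apply Rdiv_lt_0_compat; [apply pow_lt; auto | apply INR_fact_lt_0].
  - exfalso; unfold poisson_conv, pconv in Hj.
    rewrite (sum_eq _ (fun _ => 0)), sum_cte in Hj; [lra|].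
    intros i Hi; replace (g i) with 0; [ring|].
    destruct (Rlt_dec 0 (g i)) as [Hp|Hp]; [exfalso; eauto|].
    specialize (Hg i); lra.
Qed.

(** * Finitely many Bernoulli summands *)

Lemma poisson_bern_nonneg mu q n : 0 <= mu -> (forall i, 0 <= q i <= 1) ->
  nonneg_seq (poisson_conv mu (bern_sum_pmf q n)).
Proof.
  intros Hmu Hq; apply poisson_conv_nonneg; auto.
  intros j; apply bern_sum_pmf_range; auto.
Qed.

Lemma log_concave_poisson_bern mu q n : 0 <= mu -> (forall i, 0 <= q i <= 1) ->
  log_concave (poisson_conv mu (bern_sum_pmf q n)).
Proof.
  intros Hmu Hq; apply log_concave_poisson_conv, log_concave_bern_sum_pmf; auto.
  intros j; apply bern_sum_pmf_range; auto.
Qed.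

Lemma nondecr_upto_raise_params mu mu' q q' n K : 0 <= mu -> mu <= mu' ->
  (forall i, 0 <= q i) -> (forall i, q i <= q' i) -> (forall i, q' i <= 1) ->
  nondecr_upto (poisson_conv mu (bern_sum_pmf q n)) K ->
  nondecr_upto (poisson_conv mu' (bern_sum_pmf q' n)) K.
Proof.
  intros Hmu Hmu' Hq Hqq' Hq' HK.
  apply (nondecr_upto_poisson_conv_mono mu); auto.
  revert HK.
  apply (raise_coords (fun r => nondecr_upto (poisson_conv mu (bern_sum_pmf r n)) K) n); auto.
  - intros r r' E; now rewrite (bern_sum_pmf_ext r r' n E).
  - intros r i Hr Hi HK.
    assert (Hr0 : forall x, 0 <= upd r i 0 x <= 1).
    { apply (upd_forall (fun _ v => 0 <= v <= 1)); [|lra].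
      intros x; specialize (Hr x); specialize (Hq x); specialize (Hq' x); lra. }
    rewrite <- (upd_id r i), bern_sum_pmf_upd, poisson_conv_bconv in HK by auto.
    rewrite bern_sum_pmf_upd, poisson_conv_bconv by auto.
    specialize (Hr i); specialize (Hq i); specialize (Hq' i).
    apply (nondecr_upto_bconv_mono _ K (r i));
      auto using poisson_bern_nonneg, log_concave_poisson_bern; lra.
Qed.

Section TruncatedComparison.

Variables (lam' : R) (p' : nat -> R) (n m : nat).
Hypothesis Hp'1 : forall i, p' i <= 1.
Hypothesis Hdrop :
  poisson_conv lam' (bern_sum_pmf p' n) (S m) < poisson_conv lam' (bern_sum_pmf p' n) m.

Lemma trunc_nonincr_after_mode mu q k : 0 <= mu <= lam' -> (forall i, 0 <= q i <= p' i) ->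
  (m <= k)%nat ->
  poisson_conv mu (bern_sum_pmf q n) (S k) <= poisson_conv mu (bern_sum_pmf q n) k.
Proof.
  intros Hmu Hq Hk.
  assert (Hq1 : forall i, 0 <= q i <= 1)
    by (intros i; specialize (Hq i); specialize (Hp'1 i); lra).
  destruct (Rle_dec (poisson_conv mu (bern_sum_pmf q n) (S k))
                    (poisson_conv mu (bern_sum_pmf q n) k)) as [|Hup]; auto.
  exfalso; apply Rnot_le_lt in Hup.
  apply (not_nondecr_upto_of_drop _ m (S k) Hdrop); [lia|].
  apply (nondecr_upto_raise_params mu lam' q p');
    [lra | lra | intros i; apply Hq | intros i; apply Hq | exact Hp'1 |].
  assert (Hnn := poisson_bern_nonneg mu q n ltac:(lra) Hq1).
  apply nondecr_upto_of_log_concave; auto.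
  - apply log_concave_poisson_bern; auto; lra.
  - specialize (Hnn k); lra.
  - lra.
Qed.

Lemma trunc_mono_after_mode mu q q' k : 0 <= mu <= lam' ->
  (forall i, 0 <= q i) -> (forall i, q i <= q' i) -> (forall i, q' i <= p' i) -> (m <= k)%nat ->
  poisson_conv mu (bern_sum_pmf q n) (S k) <= poisson_conv mu (bern_sum_pmf q' n) (S k).
Proof.
  intros Hmu Hq Hqq' Hq'p Hk.
  apply (raise_coords (fun r => poisson_conv mu (bern_sum_pmf q n) (S k)
                                <= poisson_conv mu (bern_sum_pmf r n) (S k)) n q q');
    [| |exact Hqq' | lra].
  - intros r r' E; now rewrite (bern_sum_pmf_ext r r' n E).
  - intros r i Hr Hi H; eapply Rle_trans; [exact H|].
    assert (Hr0 : forall x, 0 <= upd r i 0 x <= p' x).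
    { apply (upd_forall (fun x v => 0 <= v <= p' x)).
      - intros x; specialize (Hr x); specialize (Hq x); specialize (Hq'p x); lra.
      - specialize (Hq i); specialize (Hqq' i); specialize (Hq'p i); lra. }
    rewrite <- (upd_id r i) at 1.
    rewrite (bern_sum_pmf_upd r i (r i)), (bern_sum_pmf_upd r i (q' i)), !poisson_conv_bconv
      by exact Hi.
    apply bconv_le_param; [apply Hr|].
    apply (trunc_nonincr_after_mode mu); auto.
Qed.

End TruncatedComparison.

(** * Passage to the limit *)

Definition admissible (q : nat -> R) : Prop := (forall i, 0 <= q i <= 1) /\ ex_series q.

Definition bern_pmf (q : nat -> R) (j : nat) : R :=
  real (Lim_seq (fun n => bern_sum_pmf q n j)).

Lemma admissible_dominated q p : admissible p -> (forall x, 0 <= q x <= p x) -> admissible q.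
Proof.
  intros [Hp Hs] Hqp; split.
  - intros x; specialize (Hp x); specialize (Hqp x); lra.
  - apply (ex_series_le q p); auto.
    intros x; specialize (Hqp x); change (norm (q x)) with (Rabs (q x)).
    rewrite Rabs_pos_eq; lra.
Qed.

Lemma admissible_upd q i v : admissible q -> 0 <= v <= q i -> admissible (upd q i v).
Proof.
  intros Hq Hv; apply (admissible_dominated _ q Hq).
  apply (upd_forall (fun x w => 0 <= w <= q x)); auto.
  intros x; pose proof (proj1 Hq x); lra.
Qed.

(* The increments of [n |-> bern_sum_pmf q n j] are bounded by [q n], hence summable. *)
Lemma is_lim_bern_sum_pmf q j : admissible q ->
  is_lim_seq (fun n => bern_sum_pmf q n j) (bern_pmf q j).
Proof.
  intros [Hq Hs].
  set (d i := bern_sum_pmf q (S i) j - bern_sum_pmf q i j).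
  assert (Hd : ex_series d).
  { apply (ex_series_le d q); auto; intros i; change (norm (d i)) with (Rabs (d i)).
    unfold d; rewrite bern_sum_pmf_S; unfold bconv.
    assert (0 <= shift (bern_sum_pmf q i) j <= 1)
      by (destruct j; simpl; [lra | apply bern_sum_pmf_range; auto]).
    pose proof (bern_sum_pmf_range q i j Hq); specialize (Hq i).
    replace ((1 - q i) * bern_sum_pmf q i j + q i * shift (bern_sum_pmf q i) j
             - bern_sum_pmf q i j)
      with (q i * (shift (bern_sum_pmf q i) j - bern_sum_pmf q i j)) by ring.
    rewrite Rabs_mult, (Rabs_pos_eq (q i)) by lra.
    assert (Rabs (shift (bern_sum_pmf q i) j - bern_sum_pmf q i j) <= 1)
      by (apply Rabs_le; lra).
    nra. }
  destruct Hd as [l Hl].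
  assert (Hlim : is_lim_seq (fun N => bern_sum_pmf q (S N) j) (l + bern_sum_pmf q 0 j)).
  { apply (is_lim_seq_ext (fun N => sum_n d N + bern_sum_pmf q 0 j)).
    - intros N; rewrite sum_n_Reals; unfold d.
      rewrite (sum_f_R0_telescope (fun i => bern_sum_pmf q i j)); ring.
    - apply is_lim_seq_plus'; [exact Hl | apply is_lim_seq_const]. }
  apply (is_lim_seq_incr_1 (fun n => bern_sum_pmf q n j)) in Hlim.
  unfold bern_pmf; rewrite (is_lim_seq_unique _ _ Hlim); exact Hlim.
Qed.

Lemma is_lim_bconv (u : nat -> nat -> R) (l : nat -> R) t j :
  (forall j, is_lim_seq (fun n => u n j) (l j)) ->
  is_lim_seq (fun n => bconv t (u n) j) (bconv t l j).
Proof.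
  intros H; unfold bconv.
  apply is_lim_seq_plus'; apply is_lim_seq_mult'; try apply is_lim_seq_const; auto.
  destruct j; simpl; [apply is_lim_seq_const | auto].
Qed.

Lemma is_lim_poisson_conv (u : nat -> nat -> R) (l : nat -> R) mu k :
  (forall j, is_lim_seq (fun n => u n j) (l j)) ->
  is_lim_seq (fun n => poisson_conv mu (u n) k) (poisson_conv mu l k).
Proof.
  intros H; unfold poisson_conv, pconv; apply is_lim_seq_mult'; [apply is_lim_seq_const|].
  set (c j := mu ^ (k - j) / INR (fact (k - j))).
  assert (Hsum : forall N, is_lim_seq (fun n => sum_f_R0 (fun j => c j * u n j) N)
                                      (sum_f_R0 (fun j => c j * l j) N)).
  { induction N as [|N IH]; simpl; [|apply is_lim_seq_plus'; [exact IH|]];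
      apply is_lim_seq_mult';
      [apply is_lim_seq_const | apply H | apply is_lim_seq_const | apply H]. }
  apply Hsum.
Qed.

Lemma bern_pmf_nonneg q : admissible q -> nonneg_seq (bern_pmf q).
Proof.
  intros Hq j.
  apply (is_lim_seq_le (fun _ => 0) (fun n => bern_sum_pmf q n j) 0 (bern_pmf q j));
    [|apply is_lim_seq_const | apply is_lim_bern_sum_pmf; auto].
  intros n; apply bern_sum_pmf_range, Hq.
Qed.

Lemma log_concave_bern_pmf q : admissible q -> log_concave (bern_pmf q).
Proof.
  intros Hq a j Haj.
  apply (is_lim_seq_le (fun n => bern_sum_pmf q n a * bern_sum_pmf q n (S j))
                       (fun n => bern_sum_pmf q n (S a) * bern_sum_pmf q n j)
                       (bern_pmf q a * bern_pmf q (S j)) (bern_pmf q (S a) * bern_pmf q j));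
    [|apply is_lim_seq_mult'; apply is_lim_bern_sum_pmf; auto ..].
  intros n; apply log_concave_bern_sum_pmf; auto; apply Hq.
Qed.

Lemma bern_pmf_upd q i v : admissible q ->
  bern_pmf (upd q i v) = bconv v (bern_pmf (upd q i 0)).
Proof.
  intros Hq; apply functional_extensionality; intros j.
  assert (Hq0 : admissible (upd q i 0))
    by (apply admissible_upd; auto; pose proof (proj1 Hq i); lra).
  assert (Hlim : is_lim_seq (fun n => bern_sum_pmf (upd q i v) n j)
                            (bconv v (bern_pmf (upd q i 0)) j)).
  { apply (is_lim_seq_ext_loc (fun n => bconv v (bern_sum_pmf (upd q i 0) n) j)).
    - exists (S i); intros n Hn; rewrite (bern_sum_pmf_upd q i v) by lia; reflexivity.
    - apply (is_lim_bconv (fun n => bern_sum_pmf (upd q i 0) n)); intros x.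
      apply is_lim_bern_sum_pmf; auto. }
  unfold bern_pmf at 1; rewrite (is_lim_seq_unique _ _ Hlim); reflexivity.
Qed.

Lemma is_lim_f_trunc mu q k : admissible q ->
  is_lim_seq (fun n => f_trunc mu q n k) (poisson_conv mu (bern_pmf q) k).
Proof.
  intros Hq; apply (is_lim_seq_ext (fun n => poisson_conv mu (bern_sum_pmf q n) k)).
  - intros n; now rewrite f_trunc_poisson_conv.
  - apply (is_lim_poisson_conv (fun n => bern_sum_pmf q n)); intros j.
    apply is_lim_bern_sum_pmf; auto.
Qed.

Lemma fpmf_poisson_conv mu q : admissible q -> fpmf mu q = poisson_conv mu (bern_pmf q).
Proof.
  intros Hq; apply functional_extensionality; intros k; unfold fpmf.
  now rewrite (is_lim_seq_unique _ _ (is_lim_f_trunc mu q k Hq)).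
Qed.

Lemma fpmf_nonneg mu q : 0 <= mu -> admissible q -> nonneg_seq (fpmf mu q).
Proof.
  intros; rewrite fpmf_poisson_conv by auto; apply poisson_conv_nonneg, bern_pmf_nonneg; auto.
Qed.

Lemma log_concave_fpmf mu q : 0 <= mu -> admissible q -> log_concave (fpmf mu q).
Proof.
  intros; rewrite fpmf_poisson_conv by auto.
  apply log_concave_poisson_conv; auto using bern_pmf_nonneg, log_concave_bern_pmf.
Qed.

Lemma fpmf_upd mu q i v : admissible q -> 0 <= v <= q i ->
  fpmf mu (upd q i v) = bconv v (fpmf mu (upd q i 0)).
Proof.
  intros Hq Hv.
  rewrite !fpmf_poisson_conv by (apply admissible_upd; auto; lra).
  now rewrite bern_pmf_upd, poisson_conv_bconv.
Qed.

Lemma eventually_lt_of_lim (u v : nat -> R) (a b : R) :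
  is_lim_seq u a -> is_lim_seq v b -> a < b -> eventually (fun n => u n < v n).
Proof.
  intros Hu Hv Hab.
  apply is_lim_seq_spec in Hu; apply is_lim_seq_spec in Hv.
  assert (He : 0 < (b - a) / 2) by lra.
  destruct (Hu (mkposreal _ He)) as [N1 HN1], (Hv (mkposreal _ He)) as [N2 HN2].
  exists (N1 + N2)%nat; intros n Hn.
  specialize (HN1 n ltac:(lia)); specialize (HN2 n ltac:(lia)); simpl in *.
  apply Rabs_def2 in HN1; apply Rabs_def2 in HN2; lra.
Qed.

Lemma fpmf_mono_after_mode lam' p' m mu q q' k : admissible p' -> 0 <= mu <= lam' ->
  (forall i, 0 <= q i) -> (forall i, q i <= q' i) -> (forall i, q' i <= p' i) ->
  fpmf lam' p' (S m) < fpmf lam' p' m -> (m <= k)%nat ->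
  fpmf mu q (S k) <= fpmf mu q' (S k).
Proof.
  intros Hp' Hmu Hq Hqq' Hq'p Hdrop Hk.
  assert (Hadq : admissible q).
  { apply (admissible_dominated q p' Hp'); intros x.
    specialize (Hq x); specialize (Hqq' x); specialize (Hq'p x); lra. }
  assert (Hadq' : admissible q').
  { apply (admissible_dominated q' p' Hp'); intros x.
    specialize (Hq x); specialize (Hqq' x); specialize (Hq'p x); lra. }
  rewrite fpmf_poisson_conv in Hdrop by auto; rewrite !fpmf_poisson_conv by auto.
  destruct (eventually_lt_of_lim _ _ _ _ (is_lim_f_trunc lam' p' (S m) Hp')
              (is_lim_f_trunc lam' p' m Hp') Hdrop) as [N HN].
  assert (Hev : eventually (fun n => f_trunc mu q n (S k) <= f_trunc mu q' n (S k))).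
  { exists N; intros n Hn; specialize (HN n Hn); rewrite !f_trunc_poisson_conv in *.
    apply (trunc_mono_after_mode lam' p' n m); auto.
    intros i; apply Hp'. }
  exact (is_lim_seq_le_loc _ _ _ _ Hev (is_lim_f_trunc mu q (S k) Hadq)
           (is_lim_f_trunc mu q' (S k) Hadq')).
Qed.

(** * Strict inequality *)

Lemma bern_pmf_zero_tail k : forall q, admissible q -> (forall i, (i < k)%nat -> 0 < q i) ->
  (forall j, (k <= j)%nat -> bern_pmf q j = 0) -> forall j, bern_pmf q j = 0.
Proof.
  induction k as [|k IH]; intros q Hq Hpos Htail j; [apply Htail; lia|].
  assert (Hqk : 0 < q k <= 1) by (split; [apply Hpos; lia | apply Hq]).
  assert (Hq0 : admissible (upd q k 0)) by (apply admissible_upd; auto; lra).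
  assert (E : bern_pmf q = bconv (q k) (bern_pmf (upd q k 0)))
    by (rewrite <- (upd_id q k) at 1; apply bern_pmf_upd; auto).
  assert (Hzero : forall j, bern_pmf (upd q k 0) j = 0).
  { apply IH; auto.
    - intros i Hi; rewrite upd_other by lia; apply Hpos; lia.
    - intros j' Hj'; specialize (Htail (S j') ltac:(lia)); rewrite E in Htail.
      unfold bconv in Htail; simpl in Htail.
      pose proof (bern_pmf_nonneg _ Hq0 j'); pose proof (bern_pmf_nonneg _ Hq0 (S j')).
      nra. }
  rewrite E; unfold bconv; rewrite Hzero; destruct j; simpl; [|rewrite Hzero]; ring.
Qed.

Lemma admissible_of_in_nabla lam p : in_nabla lam p -> admissible p.
Proof.
  intros [_ [Hp0 [Hdec [Hnn Hs]]]]; split; auto.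
  intros i; split; auto; pose proof (decreasing_prop p 0 i Hdec ltac:(lia)); lra.
Qed.

Lemma fpmf_pos_after_mode lam' p' m k : admissible p' -> Un_decreasing p' -> 0 <= lam' ->
  fpmf lam' p' (S m) < fpmf lam' p' m -> (m < k)%nat -> lam' + p' (k - 1)%nat > 0 ->
  0 < fpmf lam' p' k.
Proof.
  intros Hp' Hdec Hlam Hdrop Hmk Hpos.
  assert (Hm : 0 < fpmf lam' p' m) by (pose proof (fpmf_nonneg lam' p' Hlam Hp' (S m)); lra).
  rewrite fpmf_poisson_conv in * by auto.
  destruct (Rlt_dec 0 lam') as [Hlam0|Hlam0].
  - apply (poisson_conv_pos lam' lam' _ m); auto using bern_pmf_nonneg; lia.
  - replace lam' with 0 in * by lra; rewrite poisson_conv_at0 in *.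
    assert (Hpk : forall i, (i < k)%nat -> 0 < p' i).
    { intros i Hi; pose proof (decreasing_prop p' i (k - 1) Hdec ltac:(lia)); lra. }
    destruct (Rlt_dec 0 (bern_pmf p' k)) as [|Hk]; auto; exfalso.
    assert (Hk0 : bern_pmf p' k = 0) by (pose proof (bern_pmf_nonneg p' Hp' k); lra).
    assert (Htail := log_concave_zero_after _ m k (bern_pmf_nonneg p' Hp')
                       (log_concave_bern_pmf p' Hp') Hm Hmk Hk0).
    rewrite (bern_pmf_zero_tail k p' Hp' Hpk Htail m) in Hm; lra.
Qed.

Lemma fpmf_upd_lt lam' p' m k i v : admissible p' -> 0 <= lam' ->
  fpmf lam' p' (S m) < fpmf lam' p' m -> (m <= k)%nat -> 0 <= v < p' i ->
  0 < fpmf lam' p' (S k) -> fpmf lam' (upd p' i v) (S k) < fpmf lam' p' (S k).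
Proof.
  intros Hp' Hlam Hdrop Hk Hv Hpos.
  set (G := fpmf lam' (upd p' i 0)).
  assert (Hq0 : admissible (upd p' i 0)) by (apply admissible_upd; auto; lra).
  assert (HGn : nonneg_seq G) by (apply fpmf_nonneg; auto).
  assert (HGlc : log_concave G) by (apply log_concave_fpmf; auto).
  assert (Ep : fpmf lam' p' = bconv (p' i) G).
  { pose proof (fpmf_upd lam' p' i (p' i) Hp' ltac:(lra)) as E; now rewrite upd_id in E. }
  assert (Ev : fpmf lam' (upd p' i v) = bconv v G) by (apply fpmf_upd; auto; lra).
  assert (HG : G (S k) < G k).
  { destruct (Rlt_dec (G (S k)) (G k)) as [|Hup]; auto; exfalso; apply Rnot_lt_le in Hup.
    destruct (Rlt_dec 0 (G (S k))) as [HGpos|HGzero].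
    - apply (not_nondecr_upto_of_drop _ m (S k) Hdrop); [lia|].
      rewrite Ep; apply (nondecr_upto_bconv_mono G _ 0); auto; [lra | lra | apply Hp' |].
      rewrite bconv0; apply nondecr_upto_of_log_concave; auto.
    - rewrite Ep in Hpos; unfold bconv in Hpos; simpl in Hpos.
      pose proof (HGn k); pose proof (HGn (S k)); pose proof (proj1 Hp' i); nra. }
  assert (0 < (p' i - v) * (G k - G (S k))) by (apply Rmult_lt_0_compat; lra).
  rewrite Ep, Ev; unfold bconv; simpl shift; lra.
Qed.

Lemma fpmf_lt_of_rate_lt lam lam' p' m k : admissible p' -> 0 <= lam < lam' ->
  fpmf lam' p' (S m) < fpmf lam' p' m -> (m <= k)%nat ->
  fpmf lam p' (S k) < fpmf lam' p' (S k).
Proof.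
  intros Hp' Hlam Hdrop Hk.
  rewrite !fpmf_poisson_conv in * by auto; set (b := bern_pmf p') in *.
  assert (Hbn : nonneg_seq b) by (apply bern_pmf_nonneg; auto).
  assert (Hm : 0 < poisson_conv lam' b m)
    by (pose proof (poisson_conv_nonneg lam' b ltac:(lra) Hbn (S m)); lra).
  apply (lt_of_is_derive_pos (fun x => poisson_conv x b (S k))
           (fun x => shift (poisson_conv x b) (S k) - poisson_conv x b (S k))); [lra| |].
  { intros x _; apply is_derive_poisson_conv. }
  intros x Hx; simpl shift.
  destruct (Rlt_dec (poisson_conv x b (S k)) (poisson_conv x b k)) as [|Hup]; [lra|].
  exfalso; apply Rnot_lt_le in Hup.
  apply (not_nondecr_upto_of_drop _ m (S k) Hdrop); [lia|].
  apply (nondecr_upto_poisson_conv_mono x); [lra|].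
  apply nondecr_upto_of_log_concave; auto.
  - apply poisson_conv_nonneg; auto; lra.
  - apply log_concave_poisson_conv; [lra | exact Hbn | apply log_concave_bern_pmf; auto].
  - apply (poisson_conv_pos lam' x b m); [lra | exact Hbn | lia | exact Hm].
Qed.

Theorem lemma2 (lam : R) (p : nat -> R) (lam' : R) (p' : nat -> R)
  (m k : nat) :
  in_nabla lam p -> in_nabla lam' p' ->
  (lam <> lam' \/ exists i, p i <> p' i) ->
  lam <= lam' -> (forall i, p i <= p' i) ->
  is_leading_mode lam' p' m ->
  (m < k)%nat ->
  lam' + p' (k - 1)%nat > 0 ->
  fpmf lam' p' k > fpmf lam p k.
Proof.
  intros Hn Hn' Hdist Hll Hpp [_ Hdrop] Hmk Hpos.
  assert (Hp' := admissible_of_in_nabla _ _ Hn').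
  destruct Hn as [Hlam [_ [_ [Hp _]]]], Hn' as [Hlam' [_ [Hdec' _]]].
  assert (Hfpos := fpmf_pos_after_mode lam' p' m k Hp' Hdec' Hlam' Hdrop Hmk Hpos).
  destruct k as [|k]; [lia|]; unfold Rgt.
  destruct (Req_dec lam lam') as [<-|Hne].
  - destruct Hdist as [|[i Hi]]; [contradiction|].
    assert (Hlt : p i < p' i) by (specialize (Hpp i); lra).
    apply Rle_lt_trans with (fpmf lam (upd p' i (p i)) (S k)).
    + apply (fpmf_mono_after_mode lam p' m); auto; [| | lia].
      * apply (upd_forall (fun x w => p x <= w)); auto; lra.
      * apply (upd_forall (fun x w => w <= p' x)); intros; lra.
    + apply (fpmf_upd_lt lam p' m); auto; lia.
  - apply Rle_lt_trans with (fpmf lam p' (S k)).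
    + apply (fpmf_mono_after_mode lam' p' m); auto; [intros; lra | lia].
    + apply (fpmf_lt_of_rate_lt lam lam' p' m); auto; [lra | lia].
Qed.
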